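(* Let $V$ be a finite set, $\mu\colon\binom V2\to\mathbb{Z}_+$, $e=\{v_1,v_2\}\in\binom V2$, $r=\mu(e)$, and let $\mu_1\colon\binom V2\to\mathbb{Z}_+$ agree with $\mu$ except that $\mu_1(e)=1$. Then \[ n(\mu,V)=r\,n(\mu_1,V)+(r-1)\big[n(\mu,V\setminus\{v_1\})+n(\mu,V\setminus\{v_2\})+n(\mu,V\setminus\{v_1,v_2\})\big], \] where $n(\mu,W)$ for $W\subseteq V$ means $n$ of the restriction of $\mu$ to $\binom W2$.
   Context: For a finite set $W$ with $|W|=m$ and $\mu\colon\binom W2\to\mathbb{Z}_+$, $n(\mu,W)=\sum_{J\subseteq W,|J|\geqslant2}(-1)^{m-|J|}\prod_{e\in\binom J2}\mu(e)+(-1)^{m-1}(m-1)$. (This is the number of $(m-1)$-spheres in the wedge to which the edge inflation $(\Delta_W)_\mu$ of the full simplex on $W$ is homotopy equivalent; e.g. $n(\mu,\varnothing)=1$.) *)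

From mathcomp Require Import all_boot all_order all_algebra.
Set Implicit Arguments. Unset Strict Implicit. Unset Printing Implicit Defensive.
Import Order.TTheory GRing.Theory Num.Theory.
Local Open Scope ring_scope.

(* An edge multiplicity mu : binom(V,2) -> Z_+ is represented as a function
   on subsets of V; only its values on 2-element subsets matter. *)

(* The sign (-1)^(|W|-1) is written (-1)^+(|W|+1) so that the
   case W = empty set gives (-1)^(-1) * (-1) = 1 correctly. *)
Definition nmu (V : finType) (mu : {set V} -> nat) (W : {set V}) : int :=
  \sum_(J in powerset W | (1 < #|J|)%N)
     (-1) ^+ (#|W| - #|J|) * \prod_(E in powerset J | #|E| == 2%N) (mu E)%:Z
  + (-1) ^+ (#|W|.+1) * ((#|W|)%:Z - 1).

(* Up to the sign [(-1)^|W|], [n(mu, W)] is the alternating sum [S mu W] over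
   the subsets [J] of [W] of [(-1)^|J|] times the product of the multiplicities
   of the edges inside [J], plus the correction [(-1)^(|W|+1) (|W| - 1)].
   As [mu1] differs from [mu] only by [mu1 e = 1] on [e = {v1, v2}], the product
   for [J] gets multiplied by [r = mu e] exactly when [e] lies inside [J].
   Checking the four ways [J] can meet [e] gives
   [S mu W = r S mu1 W - (r - 1) (S mu (W - v1) + S mu (W - v2) - S mu (W - e))],
   and the correction terms satisfy the matching linear relation. *)

From mathcomp Require Import all_boot all_order all_algebra.
From mathcomp Require Import ring.
Import GRing.Theory.
Set Implicit Arguments. Unset Strict Implicit.
Local Open Scope ring_scope.

Lemma signr_subn (a b : nat) : (b <= a)%N -> (-1 : int) ^+ (a - b) = (-1) ^+ a * (-1) ^+ b.
Proof. by move=> le_ba; rewrite exprB ?unitrN1 // -exprVn invrN1. Qed.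

Section SignedSums.

Variables (V : finType) (mu : {set V} -> nat).

Definition edge_prod (J : {set V}) : int :=
  \prod_(E in powerset J | #|E| == 2%N) (mu E)%:Z.

Definition signed_edge_prod (J : {set V}) : int :=
  if (1 < #|J|)%N then (-1) ^+ #|J| * edge_prod J else 0.

Definition signed_sum (W : {set V}) : int :=
  \sum_(J : {set V} | J \subset W) signed_edge_prod J.

Lemma signed_sum_mkcond (W : {set V}) :
  signed_sum W = \sum_(J : {set V}) if J \subset W then signed_edge_prod J else 0.
Proof. exact: big_mkcond. Qed.

Lemma nmuE (W : {set V}) :
  nmu mu W = (-1) ^+ #|W| * signed_sum W + (-1) ^+ #|W|.+1 * (#|W|%:Z - 1).
Proof.
rewrite /nmu signed_sum_mkcond mulr_sumr; congr (_ + _).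
rewrite big_mkcondr big_mkcond /=; apply: eq_bigr => J _.
rewrite powersetE /signed_edge_prod; case: ifP => [sub_JW|_]; last by rewrite mulr0.
case: ifP => _; last by rewrite mulr0.
by rewrite signr_subn ?(subset_leq_card sub_JW) // -mulrA.
Qed.

End SignedSums.

Section UnitEdge.

Variables (V : finType) (mu mu1 : {set V} -> nat) (v1 v2 : V).
Hypothesis v1_neq_v2 : v1 != v2.
Hypothesis mu1_mu : forall E : {set V}, #|E| = 2%N -> E != [set v1; v2] -> mu1 E = mu E.
Hypothesis mu1_e : mu1 [set v1; v2] = 1%N.

Let r : int := (mu [set v1; v2])%:Z.

Lemma edge_prod_unit_edge (J : {set V}) :
  edge_prod mu J = if [set v1; v2] \subset J then r * edge_prod mu1 J else edge_prod mu1 J.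
Proof.
rewrite /edge_prod; case: ifP => [e_sub_J | e_notsub_J].
  have e_in_J : ([set v1; v2] \in powerset J) && (#|[set v1; v2]| == 2%N).
    by rewrite powersetE e_sub_J cards2 v1_neq_v2.
  rewrite (bigD1 [set v1; v2] e_in_J) [in RHS](bigD1 [set v1; v2] e_in_J) /= mu1_e mul1r; congr (_ * _).
  by apply: eq_bigr => E /andP[/andP[_ /eqP cardE] E_neq_e]; rewrite mu1_mu.
apply: eq_bigr => E /andP[E_in_J /eqP cardE]; rewrite mu1_mu //.
by apply: contraFneq e_notsub_J => E_eq_e; rewrite -powersetE -E_eq_e.
Qed.

Lemma signed_edge_prod_unit_edge (J : {set V}) :
  signed_edge_prod mu J =
    if [set v1; v2] \subset J then r * signed_edge_prod mu1 J else signed_edge_prod mu1 J.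
Proof.
rewrite /signed_edge_prod edge_prod_unit_edge.
by case: ifP; case: ifP; rewrite ?mulr0 // => _ _; rewrite mulrCA.
Qed.

Lemma signed_sum_unit_edge (W : {set V}) :
  signed_sum mu W =
    r * signed_sum mu1 W
    - (r - 1) * (signed_sum mu (W :\ v1) + signed_sum mu (W :\ v2)
                 - signed_sum mu (W :\: [set v1; v2])).
Proof.
rewrite -setDDl !signed_sum_mkcond !mulrDr mulrN !mulr_sumr.
rewrite -big_split -!sumrB /=.
apply: eq_bigr => J _; rewrite signed_edge_prod_unit_edge !subsetD1 subUset !sub1set.
by case: (J \subset W); case: (v1 \in J); case: (v2 \in J) => /=; ring.
Qed.

Lemma nmu_unit_edge (W : {set V}) :
  v1 \in W -> v2 \in W ->
  nmu mu W =
    r * nmu mu1 W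
    + (r - 1) * (nmu mu (W :\ v1) + nmu mu (W :\ v2) + nmu mu (W :\: [set v1; v2])).
Proof.
move=> v1_in_W v2_in_W.
have card_W : #|W| = #|W :\ v1|.+1 by rewrite (cardsD1 v1 W) v1_in_W.
have card_Wv2 : #|W :\ v2| = #|W :\ v1|.
  by apply/succn_inj; rewrite -card_W (cardsD1 v2 W) v2_in_W.
have card_Wv1 : #|W :\ v1| = #|W :\: [set v1; v2]|.+1.
  by rewrite -setDDl (cardsD1 v2 (W :\ v1)) in_setD1 eq_sym v1_neq_v2 v2_in_W.
rewrite !nmuE (signed_sum_unit_edge W) card_Wv2 card_W card_Wv1 !exprS !intS.
ring.
Qed.

End UnitEdge.

Theorem lemma4p4 (V : finType) (mu mu1 : {set V} -> nat) (v1 v2 : V) :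
  v1 != v2 ->
  (forall E : {set V}, #|E| = 2%N -> (0 < mu E)%N) ->
  (forall E : {set V}, #|E| = 2%N -> (0 < mu1 E)%N) ->
  (forall E : {set V}, #|E| = 2%N -> E != [set v1; v2] -> mu1 E = mu E) ->
  mu1 [set v1; v2] = 1%N ->
  nmu mu [set: V] =
    (mu [set v1; v2])%:Z * nmu mu1 [set: V]
    + ((mu [set v1; v2])%:Z - 1) *
      (nmu mu ([set: V] :\ v1) + nmu mu ([set: V] :\ v2)
       + nmu mu ([set: V] :\: [set v1; v2])).
Proof.
move=> v1_neq_v2 _ _ mu1_mu mu1_e.
exact: nmu_unit_edge v1_neq_v2 mu1_mu mu1_e [set: V] (in_setT v1) (in_setT v2).
Qed.
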